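(* Let $t\geq 1$ and let $M$ be a subset of $\mathbb{F}_2^t\setminus\{0\}$ with $|M|\geq t+1$. Let $H_M$ be the $t\times |M|$ matrix whose columns are the elements of $M$ (written as column vectors, in some fixed order), and let $C_M=\{v\in\mathbb{F}_2^{|M|} : H_M v^{T}=0\}$ be the associated code, a binary linear code of length $|M|$, dimension $k$ and minimum distance $d$. (a) If $M$ is sum-free and $|M|\geq s_{\max}(t)$, then $d=4$ and $M$ is not Sidon. (b) If $M$ is sum-free and Sidon and $|M|\geq s_{\max}(t-1)$, then $k=|M|-t$ and $H_M$ is a parity check matrix of $C_M$ (i.e. has rank $t$). (c) If $M$ is sum-free and Sidon and $|M|\geq s_{\max}(t-1)+1$, then $d = 5$.
   Context: $\mathbb{F}_2^t$ is the $t$-dimensional vector space over $\mathbb{F}_2$. A subset $M\subseteq \mathbb{F}_2^t$ is Sidon if $m_1+m_2\neq m_3+m_4$ for all pairwise distinct $m_1,m_2,m_3,m_4\in M$; it is sum-free if $m_1+m_2\neq m_3$ for all $m_1,m_2,m_3\in M$ (not necessarily distinct). $s_{\max}(t)$ denotes the maximum size of a Sidon set in $\mathbb{F}_2^t$ (so $s_{\max}(0)=1$). The minimum distance of a binary linear code is the minimum Hamming weight of its nonzero codewords. *)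

From HB Require Import structures.
From mathcomp Require Import all_boot all_order all_algebra.
Set Implicit Arguments. Unset Strict Implicit. Unset Printing Implicit Defensive.
Import GRing.Theory.
Local Open Scope ring_scope.

Notation vecF2 t := 'cV['F_2]_t.

Definition sidon t (M : {set vecF2 t}) : bool :=
  [forall m1 in M, forall m2 in M, forall m3 in M, forall m4 in M,
    [&& m1 != m2, m1 != m3, m1 != m4, m2 != m3, m2 != m4 & m3 != m4]
      ==> (m1 + m2 != m3 + m4)].

Definition sum_free t (M : {set vecF2 t}) : Prop :=
  forall m1 m2 m3, m1 \in M -> m2 \in M -> m3 \in M -> m1 + m2 != m3.

Definition s_max (t : nat) : nat :=
  \max_(S : {set vecF2 t} | sidon S) #|S|.

Definition H_of t (M : {set vecF2 t}) : 'M['F_2]_(t, #|M|) :=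
  \matrix_(i < t, j < #|M|) (enum_val j : vecF2 t) i 0.

Definition code_of t (M : {set vecF2 t}) : {set 'rV['F_2]_#|M|} :=
  [set v | H_of M *m v^T == 0].

(* Dimension of C_M: C_M is the (left) kernel of H_M^T, i.e. the row space
   of kermx (H_M^T); its dimension is the rank of that matrix. *)
Definition code_dim t (M : {set vecF2 t}) : nat := \rank (kermx (H_of M)^T).

Definition wt n (v : 'rV['F_2]_n) : nat := #|[set j : 'I_n | v 0 j != 0]|.

Definition is_min_dist n (C : {set 'rV['F_2]_n}) (d : nat) : Prop :=
  (exists2 c, c \in C & (c != 0%R) && (wt c == d)) /\
  (forall c, c \in C -> c != 0%R -> (d <= wt c)%N).

From HB Require Import structures.
From mathcomp Require Import all_boot all_order all_algebra.
From Stdlib Require Import Classical_Prop.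
Set Implicit Arguments. Unset Strict Implicit. Unset Printing Implicit Defensive.
Import GRing.Theory.
Local Open Scope ring_scope.

(* A word c lies in C_M exactly when the columns of H_M indexed by its support
   sum to 0, so weight-k codewords are k distinct elements of M with zero sum,
   and d is the least such k.  Since 0 is not in M there are none for k = 1, 2;
   sum-freeness rules out k = 3 and the Sidon property k = 4.  Conversely, if no
   at most 4 distinct elements of S sum to 0, then S ∪ {0} is Sidon, so
   |S| < s_max(t); this gives (a).  The bound transfers along a linear map P
   with kernel {0, m0}: if no at most 4 distinct elements of S sum to 0 or m0,
   then P(S) ∪ {0} is a Sidon set of size |S| + 1 in dimension t - 1.  For (b)
   take m0 outside the column space of H_M; for (c) take m0 in M and
   S = M \ {m0}, where k elements of S summing to m0 give k + 1 elements of M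
   summing to 0. *)

Lemma uniq4 (T : eqType) (a b c d : T) :
  uniq [:: a; b; c; d] = [&& a != b, a != c, a != d, b != c, b != d & c != d].
Proof. by rewrite /= !inE !negb_or -!andbA andbT. Qed.

Lemma F2_cases (a : 'F_2) : a = 0 \/ a = 1.
Proof. by case: a => [[|[|n]]] // ?; [left | right]; apply: val_inj. Qed.

Lemma F2_natr_eq0 (b : bool) : (b%:R == 0 :> 'F_2) = ~~ b.
Proof. by case: b; rewrite ?eqxx ?oner_eq0. Qed.

Section F2Matrices.
Variables m n : nat.
Implicit Types x y : 'M['F_2]_(m, n).

Lemma F2mx_addxx x : x + x = 0.
Proof. by apply/matrixP => i j; rewrite !mxE (addrr_pchar2 (pchar_Fp _)). Qed.

Lemma F2mx_oppr x : - x = x.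
Proof. by apply/esym/eqP; rewrite -addr_eq0 F2mx_addxx. Qed.

Lemma F2mx_addr_eq0 x y : (x + y == 0) = (x == y).
Proof. by rewrite addr_eq0 F2mx_oppr. Qed.

End F2Matrices.

Definition distinct_sum n (S : {set 'cV['F_2]_n}) (k : nat) (v : 'cV['F_2]_n) : Prop :=
  exists s : seq 'cV['F_2]_n, [/\ uniq s, size s = k, {subset s <= S} & \sum_(x <- s) x = v].

Definition zero_sum_free n (S : {set 'cV['F_2]_n}) (d : nat) : Prop :=
  forall k, (0 < k <= d)%N -> ~ distinct_sum S k 0.

Section DistinctSums.
Variable n : nat.
Implicit Types (S T : {set 'cV['F_2]_n}) (a b v : 'cV['F_2]_n).

Lemma distinct_sum_subset S T k v :
  S \subset T -> distinct_sum S k v -> distinct_sum T k v.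
Proof.
by move=> /subsetP sST [s [? ? sS ?]]; exists s; split=> // x /sS /sST.
Qed.

Lemma zero_sum_free_subset S T d : S \subset T -> zero_sum_free T d -> zero_sum_free S d.
Proof. by move=> sST zT k kd /(distinct_sum_subset sST); apply: zT. Qed.

Lemma zero_sum_freeS S d :
  zero_sum_free S d -> ~ distinct_sum S d.+1 0 -> zero_sum_free S d.+1.
Proof.
move=> zS nd k /andP [k0]; rewrite leq_eqVlt ltnS => /orP [/eqP -> // | kd].
by apply: zS; rewrite k0.
Qed.

Lemma distinct_sum1 S v : distinct_sum S 1 v <-> v \in S.
Proof.
split=> [[s [_ + sS <-]] | vS].
  by case: s sS => [|x []] // sS _; rewrite big_seq1; apply: sS; rewrite mem_head.
by exists [:: v]; split=> //= [x|]; rewrite ?big_seq1 // inE => /eqP ->.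
Qed.

Lemma distinct_sum2 S a b :
  a \in S -> b \in S -> a != b -> distinct_sum S 2 (a + b).
Proof.
move=> aS bS ab; exists [:: a; b]; split=> /=; rewrite ?inE ?ab ?big_cons ?big_nil ?addr0 //.
by move=> x; rewrite !inE => /orP [] /eqP ->.
Qed.

Lemma distinct_sum2_neq0 S v : distinct_sum S 2 v -> v != 0.
Proof.
case=> s [+ + _ <-]; case: s => [|a [|b []]] //= + _.
by rewrite !big_cons big_nil addr0 F2mx_addr_eq0 inE andbT.
Qed.

Lemma distinct_sum_setD1 S a k v :
  a \in S -> distinct_sum (S :\ a) k v -> distinct_sum S k.+1 (a + v).
Proof.
move=> aS [s [us <- sS <-]]; exists (a :: s); split; rewrite ?big_cons //=.
  by rewrite us andbT; apply/negP => /sS; rewrite !inE eqxx.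
by move=> x; rewrite inE => /orP [/eqP -> // | /sS]; rewrite inE => /andP [].
Qed.

Lemma distinct_sum_setU0 S k v :
  distinct_sum (0 |: S) k v -> distinct_sum S k v \/ distinct_sum S k.-1 v.
Proof.
move=> [s [us <- sS <-]]; have [s0 | s0] := boolP (0 \in s); [right | left].
  exists (rem 0 s); split; rewrite ?rem_uniq ?size_rem //.
    by move=> x; rewrite mem_rem_uniq // => /andP [x0 /sS]; rewrite in_setU1 (negbTE x0).
  by rewrite (big_rem _ s0) /= add0r.
exists s; split=> // x xs; move: (sS x xs); rewrite in_setU1 => /orP [/eqP x0 | //].
by rewrite -x0 xs in s0.
Qed.

End DistinctSums.

Section Sidon.
Variable n : nat.
Implicit Types S : {set 'cV['F_2]_n}.

Lemma sidonP S :
  reflect (forall a b c d, a \in S -> b \in S -> c \in S -> d \in S ->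
             [&& a != b, a != c, a != d, b != c, b != d & c != d] -> a + b != c + d)
          (sidon S).
Proof.
apply: (iffP forall_inP) => [sS a b c d aS bS cS dS | sS a aS].
  by move: (sS a aS) => /forall_inP/(_ b bS)/forall_inP/(_ c cS)/forall_inP/(_ d dS)/implyP.
by do 3![apply/forall_inP => ? ?]; apply/implyP; apply: sS.
Qed.

Lemma distinct_sum4 S a b c d : a \in S -> b \in S -> c \in S -> d \in S ->
  [&& a != b, a != c, a != d, b != c, b != d & c != d] -> distinct_sum S 4 (a + b + (c + d)).
Proof.
move=> aS bS cS dS abcd; exists [:: a; b; c; d]; split; rewrite ?uniq4 //.
  by move=> x; rewrite !inE => /or4P [] /eqP ->.
by rewrite !big_cons big_nil addr0 !addrA.
Qed.

Lemma sidon_zero_sumP S : reflect (~ distinct_sum S 4 0) (sidon S).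
Proof.
apply: (iffP idP) => [/sidonP sS [s [+ + sub]] | nz].
  case: s sub => [|a [|b [|c [|d []]]]] // sub; rewrite uniq4 => abcd _.
  rewrite !big_cons big_nil addr0 !addrA -(addrA (a + b)) => /eqP.
  by rewrite F2mx_addr_eq0; apply/negP/sS; rewrite // sub // !inE eqxx ?orbT.
apply/sidonP => a b c d aS bS cS dS abcd; rewrite -F2mx_addr_eq0.
by apply/eqP => e; apply: nz; rewrite -e; apply: distinct_sum4.
Qed.

Lemma not_sidon_distinct_sum4 S : ~~ sidon S -> distinct_sum S 4 0.
Proof.
case/forall_inPn => a aS /forall_inPn [b bS /forall_inPn [c cS /forall_inPn [d dS]]].
rewrite negb_imply negbK => /andP [abcd /eqP e].
by rewrite -(F2mx_addxx (c + d)) -[X in X + _]e; apply: distinct_sum4.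
Qed.

End Sidon.

Section ZeroSumFree.
Variable n : nat.
Implicit Types S : {set 'cV['F_2]_n}.

Lemma sum_free_zero_sum3 S : sum_free S -> ~ distinct_sum S 3 0.
Proof.
move=> sfS [s [_ + sub]]; case: s sub => [|a [|b [|c []]]] // sub _.
rewrite !big_cons big_nil addr0 addrA => /eqP; rewrite F2mx_addr_eq0.
by apply/negP/sfS; apply: sub; rewrite !inE eqxx ?orbT.
Qed.

Lemma zero_sum_free3 S : 0 \notin S -> sum_free S -> zero_sum_free S 3.
Proof.
move=> S0 sfS; apply: (zero_sum_freeS _ (sum_free_zero_sum3 sfS)).
apply: zero_sum_freeS => [|/distinct_sum2_neq0]; last by rewrite eqxx.
by apply: zero_sum_freeS => [[] | /distinct_sum1]; last exact/negP.
Qed.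

Lemma zero_sum_free4 S : 0 \notin S -> sum_free S -> sidon S -> zero_sum_free S 4.
Proof. by move=> S0 sfS /sidon_zero_sumP; apply: zero_sum_freeS (zero_sum_free3 S0 sfS). Qed.

Lemma card_le_s_max S : sidon S -> (#|S| <= s_max n)%N.
Proof. exact: leq_bigmax_cond. Qed.

Lemma sidon_setU0 S : zero_sum_free S 4 -> sidon (0 |: S).
Proof.
by move=> zS; apply/sidon_zero_sumP => /distinct_sum_setU0 [] /zS; apply.
Qed.

Lemma zero_sum_free4_card_lt S : zero_sum_free S 4 -> (#|S| < s_max n)%N.
Proof.
move=> zS; have S0 : 0 \notin S by apply/negP => /distinct_sum1; apply: zS.
have -> : #|S|.+1 = #|0 |: S| by rewrite cardsU1 S0.
exact/card_le_s_max/sidon_setU0.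
Qed.

End ZeroSumFree.

Section LinearImage.
Variables (m n : nat) (P : 'M['F_2]_(n, m)) (S : {set 'cV['F_2]_m}).

Lemma distinct_sum_imset k w : {in S &, injective (mulmx P)} ->
  distinct_sum [set P *m x | x in S] k w -> exists2 v, P *m v = w & distinct_sum S k v.
Proof.
move=> injP [s [us <- sPS <-]].
pose s' := [seq x <- enum S | P *m x \in s].
have us' : uniq s' by rewrite filter_uniq ?enum_uniq.
have sub' : {subset s' <= S} by move=> x; rewrite mem_filter mem_enum => /andP [].
have perm' : perm_eq [seq P *m x | x <- s'] s.
  apply: uniq_perm => //; first by rewrite map_inj_in_uniq // => x y /sub' xS /sub' yS; apply: injP.
  move=> y; apply/mapP/idP => [[x + ->] | ys]; first by rewrite mem_filter => /andP [].
  by have /imsetP [x xS yE] := sPS y ys; exists x; rewrite // mem_filter -yE ys mem_enum.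
exists (\sum_(x <- s') x); last first.
  by exists s'; split=> //; rewrite -(size_map (mulmx P)) (perm_size perm').
by rewrite mulmx_sumr -(perm_big _ perm') big_map.
Qed.

Lemma card_lt_s_max_mulmx :
  (forall k v, (0 < k <= 4)%N -> P *m v = 0 -> ~ distinct_sum S k v) -> (#|S| < s_max n)%N.
Proof.
move=> hP.
have injP : {in S &, injective (mulmx P)}.
  move=> a b aS bS eP; have [// | ab] := eqVneq a b.
  by case: (hP 2%N (a + b) isT _ (distinct_sum2 aS bS ab)); rewrite mulmxDr eP F2mx_addxx.
rewrite -(card_in_imset injP); apply: zero_sum_free4_card_lt => k k4.
by case/(distinct_sum_imset injP) => v; apply: hP.
Qed.

End LinearImage.

Lemma exists_mulmx_ker_line n (m0 : 'cV['F_2]_n.+1) :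
  m0 != 0 -> exists P : 'M['F_2]_(n, n.+1), forall v, P *m v = 0 -> v = 0 \/ v = m0.
Proof.
move=> m0_neq0; have [i m0i] : exists i, m0 i 0 = 1.
  have [i m0i] : exists i, m0 i 0 != 0.
    apply/existsP; apply: contraNT m0_neq0 => /existsPn m0_0.
    by apply/eqP/colP => i; rewrite mxE; apply/eqP; rewrite -[_ == _]negbK m0_0.
  by exists i; case: (F2_cases (m0 i 0)) m0i => ->; rewrite ?eqxx.
(* P v is v + v_i m0, whose i-th coordinate is 0, with that coordinate deleted. *)
exists (rowsub (lift i) (1%:M + m0 *m delta_mx 0 i)) => v.
rewrite mul_rowsub_mx mulmxDl mul1mx -mulmxA -rowE [row i v]mx11_scalar mul_mx_scalar.
move=> /matrixP vP; have /eqP : v + v i 0 *: m0 = 0.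
  apply/colP => r; case: (unliftP i r) => [j -> | ->]; first by move: (vP j 0); rewrite !mxE.
  by rewrite !mxE m0i mulr1 (addrr_pchar2 (pchar_Fp _)).
rewrite F2mx_addr_eq0 => /eqP ->.
by case: (F2_cases (v i 0)) => ->; [left; rewrite scale0r | right; rewrite scale1r].
Qed.

Lemma card_lt_s_max_avoiding n (m0 : 'cV['F_2]_n.+1) (S : {set 'cV['F_2]_n.+1}) :
  m0 != 0 -> zero_sum_free S 4 -> (forall k, (0 < k <= 4)%N -> ~ distinct_sum S k m0) ->
  (#|S| < s_max n)%N.
Proof.
move=> m0_neq0 zS nm0; have [P kerP] := exists_mulmx_ker_line m0_neq0.
by apply: (card_lt_s_max_mulmx (P := P)) => k v k4 /kerP [] ->; [apply: zS | apply: nm0].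
Qed.

Section Code.
Variables (t : nat) (M : {set 'cV['F_2]_t}).
Implicit Type c : 'rV['F_2]_#|M|.

Lemma mulmx_H_of c : H_of M *m c^T = \sum_(j | c 0 j != 0) enum_val j.
Proof.
apply/colP => i; rewrite !mxE summxE [RHS]big_mkcond /=; apply: eq_bigr => j _.
by rewrite !mxE; case: (F2_cases (c 0 j)) => ->; rewrite ?mulr0 ?mulr1 ?eqxx ?oner_eq0.
Qed.

Lemma wt_eq0 c : (wt c == 0%N) = (c == 0).
Proof.
rewrite /wt cards_eq0; apply/eqP/eqP => [/setP c0 | ->].
  by apply/rowP => j; move: (c0 j); rewrite !inE mxE => /negbFE/eqP.
by apply/setP => j; rewrite !inE mxE eqxx.
Qed.

Lemma big_enum_val_seq (R : Type) (idx : R) (op : Monoid.com_law idx) (F : _ -> R) s :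
  uniq s -> {subset s <= M} ->
  \big[op/idx]_(j < #|M| | enum_val j \in s) F (enum_val j) = \big[op/idx]_(x <- s) F x.
Proof.
move=> us sM; rewrite -big_enum_val_cond big_uniq //.
by apply: eq_bigl => x; rewrite andb_idl //; apply: sM.
Qed.

Lemma code_distinct_sum c : c \in code_of M -> distinct_sum M (wt c) 0.
Proof.
rewrite inE mulmx_H_of => /eqP c0.
exists [seq enum_val j | j <- enum [set j | c 0 j != 0]]; split.
- by rewrite map_inj_uniq ?enum_uniq //; apply: enum_val_inj.
- by rewrite size_map /wt [in RHS]cardE.
- by move=> x /mapP [j _ ->]; apply: enum_valP.
- by rewrite big_map big_enum /=; under eq_bigl do rewrite inE.
Qed.

Lemma distinct_sum_code k : distinct_sum M k 0 -> exists2 c, c \in code_of M & wt c = k.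
Proof.
move=> [s [us <- sM s0]]; exists (\row_j (enum_val j \in s)%:R).
  rewrite inE mulmx_H_of; under eq_bigl do rewrite mxE F2_natr_eq0 negbK.
  by rewrite (big_enum_val_seq _ id) ?s0.
rewrite /wt -sum1_card (eq_bigl (fun j => enum_val j \in s)) => [|j]; last first.
  by rewrite !inE mxE F2_natr_eq0 negbK.
by rewrite (big_enum_val_seq _ (fun=> 1%N)) // sum1_size.
Qed.

Lemma is_min_dist_code d :
  (0 < d)%N -> distinct_sum M d 0 -> zero_sum_free M d.-1 -> is_min_dist (code_of M) d.
Proof.
move=> d0 /distinct_sum_code [c cM wc] zM; split.
  by exists c; rewrite // -wt_eq0 wc -lt0n d0 eqxx.
move=> c' /code_distinct_sum c'M c'0; rewrite leqNgt; apply/negP => lt.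
by apply: (zM (wt c')) c'M; rewrite lt0n wt_eq0 c'0 -ltnS prednK.
Qed.

Lemma distinct_sum_sub_col k v : distinct_sum M k v -> (v^T <= (H_of M)^T)%MS.
Proof.
move=> [s [_ _ sM <-]]; rewrite big_seq raddf_sum /=; apply: summx_sub => x /sM xM.
have -> : x^T = row (enum_rank_in xM x) (H_of M)^T.
  by apply/rowP => i; rewrite !mxE enum_rankK_in.
exact: row_sub.
Qed.

End Code.

Section QuotientBounds.
Variables (n : nat) (M : {set 'cV['F_2]_n.+1}).
Hypothesis zM : zero_sum_free M 4.

Lemma rank_H_of_full : (s_max n <= #|M|)%N -> \rank (H_of M) = n.+1.
Proof.
move=> le_smax; have [// | rk_neq] := eqVneq (\rank (H_of M)) n.+1.
have /row_subPn [i] : ~~ (1%:M <= (H_of M)^T)%MS by rewrite sub1mx /row_full mxrank_tr.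
rewrite -[row i _]trmxK; set m0 := (row i 1%:M)^T => m0_span.
have m0_neq0 : m0 != 0 by apply: contraNneq m0_span => ->; rewrite trmx0 sub0mx.
suff : (#|M| < s_max n)%N by rewrite ltnNge le_smax.
by apply: card_lt_s_max_avoiding m0_neq0 zM _ => k _ /distinct_sum_sub_col; apply/negP.
Qed.

Lemma distinct_sum5_of_s_max_lt : (s_max n < #|M|)%N -> distinct_sum M 5 0.
Proof.
move=> lt_smax; have [m0 m0M] : exists m0, m0 \in M.
  by apply/set0Pn; rewrite -card_gt0 (leq_trans _ lt_smax).
have m0_neq0 : m0 != 0 by apply: contraTneq m0M => ->; apply/negP => /distinct_sum1; apply: zM.
apply: NNPP => nz5; rewrite (cardsD1 m0 M) m0M add1n ltnS in lt_smax.
suff : (#|M :\ m0| < s_max n)%N by rewrite ltnNge lt_smax.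
apply: card_lt_s_max_avoiding m0_neq0 (zero_sum_free_subset (subD1set M m0) zM) _.
move=> k /andP [_ k4] /(distinct_sum_setD1 m0M); rewrite F2mx_addxx.
exact: (zero_sum_freeS zM nz5).
Qed.

End QuotientBounds.

Theorem theorem3p2 (t : nat) (M : {set 'cV['F_2]_t}) :
  (1 <= t)%N -> 0 \notin M -> (t.+1 <= #|M|)%N ->
  [/\ (sum_free M -> (s_max t <= #|M|)%N ->
         is_min_dist (code_of M) 4 /\ ~ sidon M),
      (sum_free M -> sidon M -> (s_max t.-1 <= #|M|)%N ->
         code_dim M = (#|M| - t)%N /\ \rank (H_of M) = t)
    & (sum_free M -> sidon M -> (s_max t.-1 < #|M|)%N ->
         is_min_dist (code_of M) 5)].
Proof.
case: t M => [// | n] M _ M0 _; split.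
- move=> sfM le_smax; have nsM : ~~ sidon M.
    apply/negP => /(zero_sum_free4 M0 sfM)/zero_sum_free4_card_lt.
    by rewrite ltnNge le_smax.
  split; last exact/negP.
  exact: is_min_dist_code (not_sidon_distinct_sum4 nsM) (zero_sum_free3 M0 sfM).
- move=> sfM sM le_smax.
  have rkH := rank_H_of_full (zero_sum_free4 M0 sfM sM) le_smax.
  by rewrite /code_dim mxrank_ker mxrank_tr rkH.
- move=> sfM sM lt_smax; have zM := zero_sum_free4 M0 sfM sM.
  exact: is_min_dist_code (distinct_sum5_of_s_max_lt zM lt_smax) zM.
Qed.
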